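(* Let $\mathbf{k}$ be a field, $n\ge 1$, $N\ge 2$, and let $P_1,\dots,P_N\in\mathbf{k}^n$ be pairwise distinct points. In the point trie $T$ of the ordered list $[P_1,\dots,P_N]$, let $h\in\{1,\dots,n\}$ be the smallest level such that the node $v$ at level $h$ whose label contains $N$ has label exactly $\{N\}$. Then the parent of $v$ has at least one child other than $v$; let $w$ be the child of the parent of $v$ lying immediately to the left of $v$ (in the left-to-right order of children), and let $i_1$ be the smallest element of the label of $w$. Then: (1) $h$ equals the $\sigma$-value $\sigma(P_N,\{P_1,\dots,P_{N-1}\})$; (2) $P_{i_1}$ is the $\sigma$-antecedent of $P_N$, i.e. $i_1$ is the maximal index $m\in\{1,\dots,N-1\}$ such that $\pi_{h-1}(P_m)=\pi_{h-1}(P_N)$ and the exponents of $x_{h+1},\dots,x_n$ in the term $\Phi(P_m)$ are all zero, where $\Phi$ is the Cerlienco–Mureddu correspondence of $[P_1,\dots,P_{N-1}]$.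
   Context: Write $P_i=(a_{1,i},\dots,a_{n,i})$. For $0\le m\le n$, $\pi_m:\mathbf{k}^n\to\mathbf{k}^m$ is the projection onto the first $m$ coordinates ($\pi_0$ maps everything to the empty tuple), and for terms $\pi^m(x_1^{\gamma_1}\cdots x_n^{\gamma_n})$ denotes the exponent tuple $(\gamma_m,\dots,\gamma_n)$. Terms are monomials in $\mathbf{k}[x_1,\dots,x_n]$, ordered lexicographically with $x_1<\dots<x_n$. Point trie of an ordered list $[P_1,\dots,P_N]$ of distinct points: a rooted tree with levels $0,\dots,n$. For each $j$ and each value $c\in\pi_j(\{P_1,\dots,P_N\})$ there is exactly one node at level $j$, whose label is the set $\{i:\pi_j(P_i)=c\}$ (so the root has label $\{1,\dots,N\}$ and each leaf has a singleton label). A node at level $j\ge1$ with value $c$ is a child of the node at level $j-1$ with value obtained by dropping the last coordinate of $c$, and the edge between them is labelled by that last coordinate. The children of each node are ordered from left to right by increasing smallest element of their labels (equivalently, in the order in which they are created when the points are inserted one by one in the order $P_1,P_2,\dots$). $\sigma$-value: for a finite set $\mathbf{X}$ of points and $P\notin\mathbf{X}$, $\sigma(P,\mathbf{X})$ is the maximal $s\in\{1,\dots,n\}$ such that some $Q\in\mathbf{X}$ satisfies $\pi_{s-1}(Q)=\pi_{s-1}(P)$. Cerlienco–Mureddu correspondence $\Phi$ of an ordered list $[P_1,\dots,P_M]$ of distinct points of $\mathbf{k}^n$ (defined recursively on $M$ and on $n$; write $\Phi(P_i)=x_1^{\alpha^{(i)}_1}\cdots x_n^{\alpha^{(i)}_n}$):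 $\Phi(P_1)=1$. For $M>1$, assuming $\alpha^{(1)},\dots,\alpha^{(M-1)}$ known (these are the values of the correspondence of $[P_1,\dots,P_{M-1}]$), let $s=\sigma(P_M,\{P_1,\dots,P_{M-1}\})$; let the $\sigma$-antecedent $P_l$ be the point with maximal index $l\le M-1$ such that $\pi_{s-1}(P_l)=\pi_{s-1}(P_M)$ and $\alpha^{(l)}_{s+1}=\dots=\alpha^{(l)}_n=0$. Set $\alpha^{(M)}_j=0$ for $j>s$ and $\alpha^{(M)}_s=\alpha^{(l)}_s+1$. Then let $Y$ be the ordered list (in the order of indices) of the projections $\pi_{s-1}(P_i)$ of the points $P_i$, $1\le i\le M$, with $(\alpha^{(i)}_s,\dots,\alpha^{(i)}_n)=(\alpha^{(M)}_s,0,\dots,0)$; apply the Cerlienco–Mureddu correspondence in $\mathbf{k}^{s-1}$ to $Y$ and set $(\alpha^{(M)}_1,\dots,\alpha^{(M)}_{s-1})$ equal to the exponent vector of its value at $\pi_{s-1}(P_M)$. The image of $\Phi$ is the lexicographic Gröbner escalier of the vanishing ideal of the points. *)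

From HB Require Import structures.
From mathcomp Require Import all_boot all_algebra.
Set Implicit Arguments. Unset Strict Implicit. Unset Printing Implicit Defensive.

(* Points of k^n are n-tuples; pi_j(Q) = take j Q (first j coordinates).
   Points are indexed 1..N by a function P : nat -> n.-tuple K
   (values outside 1..N are irrelevant). *)

Section Defs.
Variable K : eqType.

(* A node of the trie is a pair (level j, value c) with c in pi_j({P_1..P_N}). *)
Definition trie_node (n N : nat) (P : nat -> n.-tuple K) (x : nat * seq K) : bool :=
  (x.1 <= n) && (x.2 \in [seq take x.1 (tval (P i)) | i <- iota 1 N]).

Definition trie_label (n N : nat) (P : nat -> n.-tuple K) (x : nat * seq K) : seq nat :=
  [seq i <- iota 1 N | take x.1 (tval (P i)) == x.2].

Definition trie_minlab (n N : nat) (P : nat -> n.-tuple K) (x : nat * seq K) : nat :=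
  head 0 (trie_label N P x).

Definition trie_parent (x : nat * seq K) : nat * seq K :=
  (x.1.-1, take x.1.-1 x.2).

Definition trie_child (n N : nat) (P : nat -> n.-tuple K) (x y : nat * seq K) : bool :=
  [&& trie_node N P x, trie_node N P y, y.1 == x.1.+1 & trie_parent y == x].

(* w is the child of u lying immediately to the left of the child v
   (children ordered left to right by increasing smallest label element) *)
Definition trie_left_neighbour (n N : nat) (P : nat -> n.-tuple K) (u v w : nat * seq K) : Prop :=
  [/\ trie_child N P u w, trie_child N P u v, trie_minlab N P w < trie_minlab N P v &
      forall x, trie_child N P u x ->
        ~~ ((trie_minlab N P w < trie_minlab N P x) && (trie_minlab N P x < trie_minlab N P v))].

Definition sigma_val (m : nat) (X : seq (seq K)) (Q : seq K) : nat :=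
  \max_(s <- iota 0 m.+1 | (0 < s) && has (fun R => take s.-1 R == take s.-1 Q) X) s.

(* cm_aux fuel m pts returns the list of exponent vectors
   (alpha_1, ..., alpha_m) (as seq nat) of Phi(P_1), ..., Phi(P_M) for the ordered
   list pts = [P_1; ...; P_M] of points of k^m.  The fuel m + M + 1 is
   sufficient (each recursive call decreases dimension + length). *)
Fixpoint cm_aux (fuel m : nat) (pts : seq (seq K)) : seq (seq nat) :=
  match fuel with
  | 0 => [::]
  | fuel'.+1 =>
    let M := size pts in
    if M <= 1 then nseq M (nseq m 0) else
    let PM := last [::] pts in
    let prev := take M.-1 pts in
    let A := cm_aux fuel' m prev in
    let s := sigma_val m prev PM in
    (* sigma-antecedent, 0-based index l < M-1 *)
    let l := \max_(l <- iota 0 M.-1 |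
               (take s.-1 (nth [::] prev l) == take s.-1 PM)
               && all (fun e => e == 0) (drop s (nth [::] A l))) l in
    let a := (nth 0 (nth [::] A l) s.-1).+1 in
    let top := a :: nseq (m - s) 0 in
    (* Y: projections pi_{s-1}(P_i), i = 1..M, with (alpha^(i)_s..alpha^(i)_m) = top;
       for i = M this holds by construction *)
    let Y := [seq take s.-1 (nth [::] pts i) |
               i <- iota 0 M & (i == M.-1) || (drop s.-1 (nth [::] A i) == top)] in
    let B := cm_aux fuel' s.-1 Y in
    rcons A (last [::] B ++ top)
  end.

Definition cm (m : nat) (pts : seq (seq K)) : seq (seq nat) :=
  cm_aux (m + size pts).+1 m pts.

End Defs.

From HB Require Import structures.
From mathcomp Require Import all_boot all_algebra.
From mathcomp Require Import zify.
Set Implicit Arguments. Unset Strict Implicit. Unset Printing Implicit Defensive.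

(* Phi(P_m) ends with the block (alpha_s + 1, 0, ..., 0) starting at position s = sigma(P_m),
   so its exponents of x_(h+1), ..., x_n all vanish exactly when sigma(P_m) <= h.  For distinct
   points this says that no earlier point shares the first h coordinates of P_m, i.e. that m is
   the smallest label of the level-h trie node of P_m.  At the level h where P_N becomes a leaf,
   minimality of h puts an earlier point below the parent of that leaf, so sigma(P_N) = h, and the
   sigma-antecedent -- the largest smallest label among the siblings of the leaf -- is the
   smallest label of the sibling immediately to its left. *)

Section SigmaValue.
Variables (K : eqType) (d : nat) (X : seq (seq K)) (Q : seq K).

Lemma sigma_val_leP k :
  (forall s, 0 < s <= d -> has (fun R => take s.-1 R == take s.-1 Q) X -> s <= k) ->
  sigma_val d X Q <= k.
Proof.
move=> le_k; apply/bigmax_leqP_seq => s; rewrite mem_iota ltnS => /andP[_ le_sd].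
by case/andP=> s_gt0 hasX; apply: le_k; rewrite ?s_gt0.
Qed.

Lemma sigma_val_geP s :
  0 < s <= d -> has (fun R => take s.-1 R == take s.-1 Q) X -> s <= sigma_val d X Q.
Proof.
case/andP=> s_gt0 le_sd hasX; apply: (leq_bigmax_seq (F := id)).
  by rewrite mem_iota ltnS.
by rewrite s_gt0.
Qed.

Lemma sigma_val_range : 0 < d -> X != [::] -> 0 < sigma_val d X Q <= d.
Proof.
move=> d_gt0 X_neq0; rewrite (@sigma_val_geP 1) ?d_gt0 //=.
  by apply: sigma_val_leP => s /andP[].
by case: X X_neq0 => //= R X' _; rewrite !take0 eqxx.
Qed.

Lemma sigma_val_leE h : h <= d ->
    (forall R, R \in X -> take h R = take h Q -> h < d) ->
  (sigma_val d X Q <= h) = ~~ has (fun R => take h R == take h Q) X.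
Proof.
move=> le_hd agree_lt; apply/idP/hasPn => [le_sigma R XR | noR].
  apply/negP=> /eqP eqRQ; have lt_hd := agree_lt R XR eqRQ.
  have : h.+1 <= sigma_val d X Q.
    by apply: sigma_val_geP; [lia | apply/hasP; exists R; rewrite //= eqRQ].
  lia.
apply: sigma_val_leP => s _ /hasP[R XR /eqP eqRQ]; rewrite leqNgt; apply/negP=> lt_hs.
by have /negP[] := noR R XR; rewrite -(take_takel R (_ : h <= s.-1)) ?eqRQ ?take_takel //; lia.
Qed.

End SigmaValue.

Lemma bigmax_mem (s : seq nat) : s != [::] -> \max_(i <- s) i \in s.
Proof.
elim: s => // x s IHs _; rewrite big_cons inE.
case: s IHs => [|y s] IHs; first by rewrite big_nil maxn0 eqxx.
by rewrite /maxn; case: ifP => _; [rewrite IHs ?orbT | rewrite eqxx].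
Qed.

Lemma bigmax_cond_mem (r : seq nat) (p : pred nat) :
  has p r -> p (\max_(i <- r | p i) i) && (\max_(i <- r | p i) i \in r).
Proof. by rewrite has_filter -big_filter -mem_filter => /bigmax_mem. Qed.

Lemma all_zero_nseq k h : all (fun e => e == 0) (drop h (nseq k 0)).
Proof. by apply/allP=> e /mem_drop /nseqP[->]. Qed.

Lemma all_zero_drop_cat (lB : seq nat) a k h : 0 < a ->
  all (fun e => e == 0) (drop h (lB ++ a :: nseq k 0)) = (size lB < h).
Proof.
move=> a_gt0; rewrite drop_cat; case: ltnP => [lt_h | ge_h].
  by rewrite all_cat /= (gtn_eqF a_gt0) andbF ltnNge ltnW.
case: (h - size lB) (subnKC ge_h) => [|k'] /= def_h.
  by rewrite (gtn_eqF a_gt0) -def_h addn0 ltnn.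
by rewrite all_zero_nseq -def_h addnS ltnS leq_addr.
Qed.

Definition x1_power (v : seq nat) := all (fun e => e == 0) (drop 1 v).

(* Pure powers of x_1 appear in Phi with strictly increasing exponents: this is what makes the
   recursive call of the case sigma = 1 run on the single point [::]. *)
Definition cm_invariant (d M : nat) (A : seq (seq nat)) :=
  [/\ size A = M, all (fun v => size v == d) A, (0 < M -> nth [::] A 0 = nseq d 0) &
      forall i j, i < j < M -> x1_power (nth [::] A i) -> x1_power (nth [::] A j) ->
        nth 0 (nth [::] A i) 0 < nth 0 (nth [::] A j) 0].

Section CMStep.
Variables (K : eqType) (fuel : nat).
Hypothesis cm_invariant_fuel : forall d (pts : seq (seq K)),
  0 < d -> d + size pts < fuel -> cm_invariant d (size pts) (cm_aux fuel d pts).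
Variables (d : nat) (prev : seq (seq K)) (Q : seq K).
Hypotheses (d_gt0 : 0 < d) (prev_neq0 : prev != [::]) (fuel_big : d + size prev < fuel).

Let s := sigma_val d prev Q.
Let A := cm_aux fuel d prev.
Let l := \max_(l <- iota 0 (size prev) | (take s.-1 (nth [::] prev l) == take s.-1 Q)
                                        && all (fun e => e == 0) (drop s (nth [::] A l))) l.
Let a := (nth 0 (nth [::] A l) s.-1).+1.
Let top := a :: nseq (d - s) 0.
Let Y := [seq take s.-1 (nth [::] (rcons prev Q) i) |
           i <- iota 0 (size prev).+1 & (i == size prev) || (drop s.-1 (nth [::] A i) == top)].

Let size_prev_gt0 : 0 < size prev. Proof. by rewrite lt0n size_eq0. Qed.
Let invA : cm_invariant d (size prev) A. Proof. by apply: cm_invariant_fuel. Qed.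
Let s_range : 0 < s <= d. Proof. exact: sigma_val_range. Qed.

Lemma cm_aux_rcons :
  cm_aux fuel.+1 d (rcons prev Q) = rcons A (last [::] (cm_aux fuel s.-1 Y) ++ top).
Proof.
have take_prev : take (size prev) (rcons prev Q) = prev by rewrite -cats1 take_size_cat.
by cbn [cm_aux]; rewrite size_rcons ltnS leqNgt size_prev_gt0 succnK take_prev last_rcons.
Qed.

Lemma cm_x1_exponent_fresh : s = 1 ->
  forall i, i < size prev -> x1_power (nth [::] A i) -> nth 0 (nth [::] A i) 0 < a.
Proof.
move=> s1 i lt_i x1_i; have [_ _ A0 x1_incr] := invA.
have has0 : has (fun l => (take s.-1 (nth [::] prev l) == take s.-1 Q)
                         && all (fun e => e == 0) (drop s (nth [::] A l))) (iota 0 (size prev)).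
  by apply/hasP; exists 0; rewrite ?mem_iota // s1 !take0 eqxx A0 ?all_zero_nseq.
have /andP[/andP[_ x1_l] l_in] := bigmax_cond_mem has0.
rewrite -/l s1 in x1_l; rewrite -/l mem_iota in l_in.
have le_il : i <= l by apply: (leq_bigmax_seq (F := id)); rewrite ?mem_iota ?s1 ?take0 ?eqxx.
rewrite /a s1 ltnS; case: ltngtP le_il => // [lt_il _ | -> _ //].
by apply/ltnW/x1_incr => //; rewrite lt_il; lia.
Qed.

Lemma cm_x1_projections : s = 1 -> Y = [:: [::]].
Proof.
move=> s1; rewrite /Y -addn1 iotaD filter_cat (eq_in_filter (a2 := pred0)).
  by rewrite filter_pred0 s1 /= eqxx /= take0.
move=> i; rewrite mem_iota /= => lt_i.
rewrite (ltn_eqF lt_i) s1 drop0 /=; apply/negbTE/eqP => A_i.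
have := cm_x1_exponent_fresh s1 lt_i; rewrite A_i ltnn.
by move/(_ (all_zero_nseq _ 0)).
Qed.

Lemma cm_last_size : size (last [::] (cm_aux fuel s.-1 Y)) = s.-1.
Proof.
have [s1 | lt1s] := eqVneq s 1.
  by rewrite cm_x1_projections // s1; case: fuel fuel_big.
have Y_range : 0 < size Y <= (size prev).+1.
  rewrite size_map size_filter -has_count -{3}[(size prev).+1](size_iota 0) count_size andbT.
  by apply/hasP; exists (size prev); rewrite ?eqxx // mem_iota add0n ltnSn.
have [sizeB sizesB _ _] : cm_invariant s.-1 (size Y) (cm_aux fuel s.-1 Y).
  by apply: cm_invariant_fuel; move: s_range; lia.
case: (cm_aux fuel s.-1 Y) sizeB sizesB => [|v B] sizeB /allP sizesB.
  by rewrite -sizeB in Y_range.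
by apply/eqP/sizesB; rewrite /= mem_last.
Qed.

Lemma cm_aux_rcons_spec : exists lB a,
  [/\ cm_aux fuel.+1 d (rcons prev Q) = rcons A (lB ++ a :: nseq (d - s) 0),
      size lB = s.-1, 0 < a &
      s = 1 -> forall i, i < size prev -> x1_power (nth [::] A i) -> nth 0 (nth [::] A i) 0 < a].
Proof.
exists (last [::] (cm_aux fuel s.-1 Y)), a.
by split; [exact: cm_aux_rcons | exact: cm_last_size | | exact: cm_x1_exponent_fresh].
Qed.

End CMStep.

Section CMExponents.
Variable K : eqType.

Lemma cm_aux_small fuel d (pts : seq (seq K)) :
  size pts <= 1 -> cm_aux fuel.+1 d pts = nseq (size pts) (nseq d 0).
Proof. by move=> small; cbn [cm_aux]; rewrite small. Qed.

Lemma x1_power_cat (lB : seq nat) a z : 0 < a -> x1_power (lB ++ a :: z) -> lB = [::].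
Proof.
case: lB => [//|b lB] a_gt0; rewrite /x1_power /= drop0 all_cat /= (gtn_eqF a_gt0).
by rewrite andbF.
Qed.

Lemma cm_aux_invariant fuel d (pts : seq (seq K)) :
  0 < d -> d + size pts < fuel -> cm_invariant d (size pts) (cm_aux fuel d pts).
Proof.
elim: fuel d pts => [//|fuel IH] d pts d_gt0 fuel_big.
have [small | two_le] := leqP (size pts) 1.
  rewrite cm_aux_small //; split; rewrite ?size_nseq //.
  - by apply/allP => v /nseqP[-> _]; rewrite size_nseq.
  - by rewrite nth_nseq => ->.
  - by move=> i j; lia.
case/lastP: pts fuel_big two_le => [//|prev Q]; rewrite size_rcons ltnS addnS => fuel_big.
rewrite ltnS lt0n size_eq0 => prev_neq0.
have [lB [a [-> size_lB a_gt0 fresh]]] := cm_aux_rcons_spec IH Q d_gt0 prev_neq0 fuel_big.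
have [sizeA sizesA A0 x1_incr] := IH d prev d_gt0 fuel_big.
have s_range := sigma_val_range Q d_gt0 prev_neq0.
split.
- by rewrite size_rcons sizeA.
- by rewrite all_rcons sizesA size_cat size_lB /= size_nseq andbT; apply/eqP; lia.
- by move=> _; rewrite nth_rcons sizeA ifT ?A0 // lt0n size_eq0.
move=> i j /andP[lt_ij lt_j]; have lt_i : i < size prev by lia.
rewrite !nth_rcons sizeA lt_i.
case: ltnP => [lt_jprev | ge_j]; first by apply: x1_incr; rewrite lt_ij.
rewrite ifT; last by apply/eqP; lia.
move=> x1_i /(x1_power_cat a_gt0) lB_nil; rewrite lB_nil.
by apply: fresh => //; move: size_lB s_range; rewrite lB_nil /=; lia.
Qed.

Lemma cm_aux_tail_zeroE fuel d (pts : seq (seq K)) i h :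
  0 < d -> d + size pts < fuel -> i < size pts ->
  all (fun e => e == 0) (drop h (nth [::] (cm_aux fuel d pts) i)) =
    (i == 0) || (sigma_val d (take i pts) (nth [::] pts i) <= h).
Proof.
elim: fuel d pts i => [//|fuel IH] d pts i d_gt0 fuel_big lt_i.
have [small | two_le] := leqP (size pts) 1.
  have i0 : i = 0 by lia.
  by rewrite i0 cm_aux_small // nth_nseq ifT ?all_zero_nseq // -i0.
case/lastP: pts fuel_big lt_i two_le => [//|prev Q]; rewrite size_rcons ltnS addnS.
move=> fuel_big le_i; rewrite ltnS lt0n size_eq0 => prev_neq0.
have [lB [a [-> size_lB a_gt0 _]]] :=
  cm_aux_rcons_spec (@cm_aux_invariant fuel) Q d_gt0 prev_neq0 fuel_big.
have [sizeA _ _ _] := cm_aux_invariant d_gt0 fuel_big.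
rewrite !nth_rcons sizeA -cats1 takel_cat //; case: ltnP => [lt_i | ge_i].
  by rewrite IH // ltnW.
have -> : i = size prev by lia.
rewrite eqxx take_size all_zero_drop_cat // size_lB size_eq0 (negbTE prev_neq0) /=.
by case: sigma_val (sigma_val_range Q d_gt0 prev_neq0).
Qed.

End CMExponents.

Section PointTrie.
Variables (K : eqType) (n N : nat) (P : nat -> n.-tuple K).

Lemma mem_trie_label x j : (j \in trie_label N P x) = (1 <= j <= N) && (take x.1 (P j) == x.2).
Proof. by rewrite mem_filter mem_iota andbC add1n ltnS. Qed.

Lemma trie_minlab_leq x j : j \in trie_label N P x -> trie_minlab N P x <= j.
Proof.
have : sorted ltn (trie_label N P x) := sorted_filter ltn_trans _ (iota_ltn_sorted 1 N).
rewrite /trie_minlab; case: (trie_label N P x) => [//|k s] /= /(order_path_min ltn_trans).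
by move=> /allP k_min; rewrite inE => /predU1P[-> // | /k_min /ltnW].
Qed.

Lemma trie_minlab_mem x j : j \in trie_label N P x -> trie_minlab N P x \in trie_label N P x.
Proof. by rewrite /trie_minlab; case: (trie_label N P x) => //= k s _; rewrite mem_head. Qed.

Lemma trie_minlab_eqE k m : 1 <= m <= N ->
  (trie_minlab N P (k, take k (P m)) == m) =
    ~~ has (fun j => take k (P j) == take k (P m)) (iota 1 m.-1).
Proof.
move=> m_range; set x := (k, take k (P m)).
have m_in : m \in trie_label N P x by rewrite mem_trie_label m_range eqxx.
have := trie_minlab_mem m_in; rewrite mem_trie_label => /andP[min_range min_eq].
apply/eqP/hasPn => [min_m j | m_first].
  rewrite mem_iota => j_range; apply/negP => eq_j.
  have : m <= j by rewrite -{1}min_m trie_minlab_leq // mem_trie_label eq_j andbT; lia.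
  lia.
apply/eqP; rewrite eqn_leq trie_minlab_leq // leqNgt; apply/negP => lt_min.
have /negP[] : ~~ (take k (P (trie_minlab N P x)) == take k (P m)).
  by apply: m_first; rewrite mem_iota; lia.
exact: min_eq.
Qed.

Lemma trie_child_take k j : k < n -> 1 <= j <= N ->
  trie_child N P (k, take k (P j)) (k.+1, take k.+1 (P j)).
Proof.
move=> lt_kn j_range; have j_in : j \in iota 1 N by rewrite mem_iota; lia.
rewrite /trie_child /trie_node /trie_parent /= (ltnW lt_kn) lt_kn take_takel //.
by rewrite !(map_f (fun i => take _ (tval (P i))) j_in) !eqxx.
Qed.

Lemma trie_childP x w : trie_child N P x w ->
  exists2 j, 1 <= j <= N & w = (x.1.+1, take x.1.+1 (P j)) /\ take x.1 (P j) = x.2.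
Proof.
case: x w => k c [k' c']; rewrite /trie_child /trie_node /trie_parent /=.
case/and4P=> _ /andP[_ /mapP[i i_in ->]] /eqP-> /eqP/= [<-].
exists i; first by move: i_in; rewrite mem_iota; lia.
by rewrite take_takel.
Qed.

Lemma trie_child_of_prefix k i j : 0 < k <= n -> 1 <= j <= N ->
    take k.-1 (P j) = take k.-1 (P i) ->
  trie_child N P (trie_parent (k, take k (P i))) (k, take k (P j)).
Proof.
case/andP=> k_gt0 le_kn j_range eq_j; rewrite /trie_parent /= take_takel ?leq_pred // -eq_j.
by have := @trie_child_take k.-1 j (ltac:(lia)) j_range; rewrite prednK.
Qed.

End PointTrie.

Lemma cm_tail_zeroE (K : eqType) n N (P : nat -> n.-tuple K) M m h :
    (forall i j, 1 <= i <= N -> 1 <= j <= N -> P i = P j -> i = j) ->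
    0 < n -> h <= n -> M <= N -> 1 <= m <= M ->
  all (fun e => e == 0) (drop h (nth [::] (cm n [seq tval (P i) | i <- iota 1 M]) m.-1)) =
    (trie_minlab N P (h, take h (P m)) == m).
Proof.
move=> P_inj n_gt0 le_hn le_MN m_range.
set pts := [seq tval (P i) | i <- iota 1 M].
have size_pts : size pts = M by rewrite size_map size_iota.
have nth_pts : nth [::] pts m.-1 = P m.
  by rewrite (nth_map 0) ?size_iota ?nth_iota ?add1n ?prednK //; lia.
have take_pts : take m.-1 pts = [seq tval (P i) | i <- iota 1 m.-1].
  by rewrite -map_take take_iota; congr (map _ (iota _ _)); lia.
rewrite trie_minlab_eqE; last by lia.
rewrite /cm cm_aux_tail_zeroE ?size_pts //; last by lia.
rewrite nth_pts take_pts; case: (posnP m.-1) => [-> // | m1_gt0].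
rewrite sigma_val_leE // ?has_map // => R /mapP[j j_in ->] eq_take.
rewrite ltn_neqAle le_hn andbT; apply/eqP => h_n; move: j_in eq_take.
rewrite mem_iota h_n !take_oversize ?size_tuple // => j_range /val_inj /P_inj; lia.
Qed.

Section LastPointLeaf.
Variables (K : eqType) (n N : nat) (P : nat -> n.-tuple K) (h : nat).
Hypotheses (N_ge2 : 2 <= N) (h_range : 1 <= h <= n)
  (leaf_h : trie_label N P (h, take h (P N)) = [:: N])
  (no_leaf_below : forall h', 1 <= h' < h -> trie_label N P (h', take h' (P N)) != [:: N]).

Lemma take_h_eq_last j : 1 <= j <= N -> take h (P j) = take h (P N) -> j = N.
Proof.
move=> j_range eq_j.
have : j \in trie_label N P (h, take h (P N)) by rewrite mem_trie_label j_range eq_j eqxx.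
by rewrite leaf_h inE => /eqP.
Qed.

Lemma exists_prefix_sibling : exists2 i, 1 <= i <= N.-1 & take h.-1 (P i) = take h.-1 (P N).
Proof.
set prefix_i := fun i => take h.-1 (P i) == take h.-1 (P N).
have [/hasP[i] | no_i] := boolP (has prefix_i (iota 1 N.-1)).
  by rewrite mem_iota => i_range /eqP; exists i => //; lia.
have lt1h : 1 < h.
  rewrite ltnNge; apply: contra no_i => le_h1; apply/hasP; exists 1.
    by rewrite mem_iota; lia.
  by rewrite /prefix_i (_ : h.-1 = 0) ?take0 //; lia.
have /eqP[] := no_leaf_below (h' := h.-1) (ltac:(lia)).
rewrite /trie_label (_ : iota 1 N = iota 1 N.-1 ++ iota (1 + N.-1) 1); last first.
  by rewrite -iotaD addn1 prednK //; lia.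
move: no_i; rewrite filter_cat has_filter negbK => /eqP -> /=.
by rewrite add1n prednK ?eqxx //; lia.
Qed.

Lemma sigma_val_last : sigma_val n [seq tval (P i) | i <- iota 1 N.-1] (P N) = h.
Proof.
have [i0 i0_range eq_i0] := exists_prefix_sibling.
apply/eqP; rewrite eqn_leq; apply/andP; split.
  apply: sigma_val_leP => s s_range /hasP[R /mapP[j j_in ->] /eqP eq_j].
  rewrite leqNgt; apply/negP => lt_hs; move: j_in; rewrite mem_iota => j_range.
  have le_h : h <= s.-1 by lia.
  have := take_h_eq_last (j := j) (ltac:(lia)).
  by rewrite -(take_takel (P j) le_h) eq_j take_takel // => /(_ erefl); lia.
apply: sigma_val_geP => //; apply/hasP; exists (tval (P i0)); last exact/eqP.
by apply: map_f; rewrite mem_iota; lia.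
Qed.

End LastPointLeaf.

Unset Implicit Arguments.

Theorem mainTheorem1 (K : fieldType) (n N : nat) (P : nat -> n.-tuple K) (h : nat) :
  1 <= n -> 2 <= N ->
  (forall i j, 1 <= i <= N -> 1 <= j <= N -> P i = P j -> i = j) ->
  (* h is the smallest level in {1..n} whose node containing N has label {N} *)
  1 <= h <= n ->
  trie_label N P (h, take h (tval (P N))) = [:: N] ->
  (forall h', 1 <= h' < h -> trie_label N P (h', take h' (tval (P N))) != [:: N]) ->
  let v := (h, take h (tval (P N))) in
  let prev := [seq tval (P i) | i <- iota 1 N.-1] in
  let Phi := cm n prev in
  (exists x, trie_child N P (trie_parent v) x /\ x != v) /\
  (forall w, trie_left_neighbour N P (trie_parent v) v w ->
     let i1 := trie_minlab N P w in
     (* (1) *)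
     h = sigma_val n prev (tval (P N)) /\
     (* (2) *)
     [/\ 1 <= i1 <= N.-1,
         take h.-1 (tval (P i1)) = take h.-1 (tval (P N)),
         all (fun e => e == 0) (drop h (nth [::] Phi i1.-1)) &
         forall m, 1 <= m <= N.-1 ->
           take h.-1 (tval (P m)) = take h.-1 (tval (P N)) ->
           all (fun e => e == 0) (drop h (nth [::] Phi m.-1)) -> m <= i1]).
Proof.
move=> n_gt0 N_ge2 P_inj h_range leaf_h no_leaf_below v prev Phi.
have [i0 i0_range i0_prefix] := exists_prefix_sibling N_ge2 h_range no_leaf_below.
have sibling j := trie_child_of_prefix (N := N) (P := P) (i := N) (j := j) h_range.
split.
  exists (h, take h (P i0)); split; first by apply: sibling => //; lia.
  by apply/eqP => -[/(take_h_eq_last leaf_h)]; lia.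
move=> w [w_child _ lt_wv w_left] i1.
have [j j_range [w_def j_prefix]] := trie_childP w_child.
rewrite /= prednK in w_def j_prefix; last by lia.
have : i1 \in trie_label N P w.
  by apply: (trie_minlab_mem (j := j)); rewrite mem_trie_label w_def j_range eqxx.
rewrite mem_trie_label w_def => /andP[i1_range /eqP i1_eq].
have w_i1 : w = (h, take h (P i1)) by rewrite w_def i1_eq.
have minlab_v : trie_minlab N P v = N by rewrite /trie_minlab leaf_h.
have lt_i1N : i1 < N by rewrite minlab_v in lt_wv.
have zero_tail m : 1 <= m <= N.-1 ->
    all (fun e => e == 0) (drop h (nth [::] Phi m.-1)) =
      (trie_minlab N P (h, take h (P m)) == m).
  by move=> m_range; apply: cm_tail_zeroE => //; lia.
split; first by rewrite (sigma_val_last N_ge2 h_range leaf_h no_leaf_below).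
split.
- lia.
- by rewrite -(take_takel _ (leq_pred h)) i1_eq take_takel ?leq_pred // j_prefix
    take_takel ?leq_pred.
- by rewrite zero_tail -?w_i1 //; lia.
move=> m m_range m_prefix; rewrite zero_tail // => /eqP minlab_m.
have := w_left _ (sibling m (ltac:(lia)) m_prefix).
by rewrite minlab_m minlab_v -/i1; lia.
Qed.
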